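(* There is a constant $C$ depending only on $D$ such that for every $w,z\in\mathbb{S}^D_+$ and every $\pi\in\Pi(z+w)$ there exists $\pi'\in\Pi(z)$ with $\displaystyle\int_0^1|\pi(s)-\pi'(s)|\,ds\le C\,K(z,|w|).$
   Context: $\mathbb{S}^D$ is the space of real symmetric $D\times D$ matrices with entrywise inner product $a\cdot b=\sum_{i,j}a_{ij}b_{ij}$ and norm $|a|=\sqrt{a\cdot a}$; $\mathbb{S}^D_+$ is the set of positive semidefinite ones; $a\succeq b$ means $a\cdot c\ge b\cdot c$ for all $c\in\mathbb{S}^D_+$. $\Pi$ is the set of left-continuous maps $\pi:[0,1]\to\mathbb{S}^D_+$ with $\pi(s')\succeq\pi(s)$ for $s'\ge s$, and $\Pi(z)=\{\pi\in\Pi:\pi(1)=z\}$. For $z\in\mathbb{S}^D_+\setminus\{0\}$, $m(z)$ denotes the smallest positive eigenvalue of $z$. For $z\in\mathbb{S}^D_+$ and $r\ge0$, $K(z,r)=(|z|+r)\big(1+|z|^{1/2}m(z)^{-1/2}\big)m(z)^{-1/2}r^{1/2}+\sqrt{(|z|+r)r}$ if $z\neq0$, and $K(0,r)=r$. *)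

From HB Require Import structures.
From mathcomp Require Import all_boot all_order all_algebra.
From mathcomp Require Import all_classical all_reals all_analysis.
Set Implicit Arguments. Unset Strict Implicit. Unset Printing Implicit Defensive.
Import Order.TTheory GRing.Theory Num.Theory.
Import numFieldNormedType.Exports.
Local Open Scope classical_set_scope.
Local Open Scope ring_scope.

Section Defs.
Variables (R : realType) (D : nat).

Definition mdot (a b : 'M[R]_D) : R := \sum_i \sum_j a i j * b i j.
Definition mnorm (a : 'M[R]_D) : R := Num.sqrt (mdot a a).

Definition symmetric (a : 'M[R]_D) : Prop := a^T = a.
Definition psd (a : 'M[R]_D) : Prop :=
  symmetric a /\ forall v : 'cV[R]_D, 0 <= (v^T *m a *m v) 0 0.
Definition mge (a b : 'M[R]_D) : Prop :=
  forall c, psd c -> mdot b c <= mdot a c.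

(* Pi: left-continuous, S^D_+-valued, nondecreasing maps on [0,1]
   (values of pi outside [0,1] are irrelevant). *)
Definition in_Pi (pi : R -> 'M[R]_D) : Prop :=
  (forall s, 0 <= s <= 1 -> psd (pi s)) /\
  (forall s s', 0 <= s -> s <= s' -> s' <= 1 -> mge (pi s') (pi s)) /\
  (forall s, 0 < s <= 1 -> forall i j,
      (fun t => pi t i j) @ at_left s --> pi s i j).

Definition in_Pi_z (z : 'M[R]_D) (pi : R -> 'M[R]_D) : Prop :=
  in_Pi pi /\ pi 1 = z.

Definition mpos (z : 'M[R]_D) : R :=
  inf [set l : R | 0 < l /\ eigenvalue z l].

Definition Kfun (z : 'M[R]_D) (r : R) : R :=
  if z == 0 then r
  else (mnorm z + r) * (1 + Num.sqrt (mnorm z) / Num.sqrt (mpos z))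
         / Num.sqrt (mpos z) * Num.sqrt r
       + Num.sqrt ((mnorm z + r) * r).

End Defs.

From Pilot Require Import Defs.
From HB Require Import structures.
From mathcomp Require Import all_boot all_order all_algebra.
From mathcomp Require Import all_classical all_reals all_analysis.
From mathcomp Require Import ring lra.
Import Order.TTheory GRing.Theory Num.Theory.
Import numFieldNormedType.Exports.
Local Open Scope classical_set_scope.
Local Open Scope ring_scope.
Set Implicit Arguments. Unset Strict Implicit. Unset Printing Implicit Defensive.

(* Write a = |z|, r = |w| and m = m(z).  If a + r <= K(z, r), which covers
   z = 0 and m <= r, the constant path z works, as all entries of pi(s) and of z
   are bounded by a + r.  Otherwise r < m; take a projector P onto the range of
   z with z P = z, c = m / (m + r), and
     pi'(s) = c P^T pi(s) P + (z - c P^T (z + w) P).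
   The constant term is psd because z >= m on the range of z while w <= r, so
   pi' is in Pi(z).  On ker z, pi(s) <= z + w reduces to pi(s) <= w, hence by
   Cauchy-Schwarz the parts of pi - pi' leaving the range are at most
   sqrt((a + r) r); the rest is (1 - c) times terms of size a + r, and
   1 - c = r / (m + r) <= sqrt(r / m).  The needed spectral fact about m(z) comes
   from the infimum of the Rayleigh quotient of z on its range, which is
   attained at an eigenvector since otherwise z - inf would be coercive there. *)

Section CauchySchwarz.
Variable R : realFieldType.

Lemma quadratic_ge0_discr_le (p b q : R) : 0 <= q ->
  (forall t, 0 <= p + 2 * t * b + t ^+ 2 * q) -> b ^+ 2 <= p * q.
Proof.
move=> q_ge0 quad_ge0; have [q0|q_neq0] := eqVneq q 0.
  have [->|b_neq0] := eqVneq b 0; first by rewrite q0 expr0n mulr0.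
  have := quad_ge0 (- (p + 1) / (2 * b)).
  have -> : 2 * (- (p + 1) / (2 * b)) * b = - (p + 1) by field; rewrite b_neq0.
  by rewrite q0 !mulr0; lra.
have q_gt0 : 0 < q by rewrite lt_def q_neq0.
have := quad_ge0 (- b / q).
have -> : p + 2 * (- b / q) * b + (- b / q) ^+ 2 * q = (p * q - b ^+ 2) / q by field.
by rewrite pmulr_lge0 ?invr_gt0 // subr_ge0.
Qed.

Lemma cauchy_schwarz_sum (I : finType) (x y : I -> R) :
  (\sum_i x i * y i) ^+ 2 <= (\sum_i x i ^+ 2) * (\sum_i y i ^+ 2).
Proof.
apply: quadratic_ge0_discr_le; first by apply: sumr_ge0 => i _; exact: sqr_ge0.
move=> t; have -> : \sum_i x i ^+ 2 + 2 * t * (\sum_i x i * y i) + t ^+ 2 * (\sum_i y i ^+ 2)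
    = \sum_i (x i + t * y i) ^+ 2.
  by rewrite !mulr_sumr -!big_split; apply: eq_bigr => i _ /=; ring.
by apply: sumr_ge0 => i _; exact: sqr_ge0.
Qed.

End CauchySchwarz.

Section BilinearForm.
Variables (R : realType) (n : nat).
Implicit Types (Y A B : 'M[R]_n) (u v : 'cV[R]_n).

Definition bform Y u v : R := (u^T *m Y *m v) 0 0.
Definition sqnorm v : R := \sum_i v i 0 ^+ 2.

Lemma bformE Y u v : bform Y u v = \sum_i \sum_j u i 0 * Y i j * v j 0.
Proof.
rewrite /bform mxE; under eq_bigr => j _ do rewrite mxE big_distrl /=.
rewrite exchange_big; apply: eq_bigr => i _; apply: eq_bigr => j _.
by rewrite !mxE.
Qed.

Lemma bformD Y1 Y2 u v : bform (Y1 + Y2) u v = bform Y1 u v + bform Y2 u v.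
Proof. by rewrite /bform mulmxDr mulmxDl mxE. Qed.

Lemma bformB Y1 Y2 u v : bform (Y1 - Y2) u v = bform Y1 u v - bform Y2 u v.
Proof. by rewrite /bform mulmxBr mulmxBl !mxE. Qed.

Lemma bformZ t Y u v : bform (t *: Y) u v = t * bform Y u v.
Proof. by rewrite /bform -scalemxAr -scalemxAl mxE. Qed.

Lemma bformDl Y u1 u2 v : bform Y (u1 + u2) v = bform Y u1 v + bform Y u2 v.
Proof. by rewrite /bform linearD /= !mulmxDl mxE. Qed.

Lemma bformBl Y u1 u2 v : bform Y (u1 - u2) v = bform Y u1 v - bform Y u2 v.
Proof. by rewrite /bform linearB /= !mulmxBl !mxE. Qed.

Lemma bformZl Y t u v : bform Y (t *: u) v = t * bform Y u v.
Proof. by rewrite /bform linearZ /= -!scalemxAl mxE. Qed.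

Lemma bformDr Y u v1 v2 : bform Y u (v1 + v2) = bform Y u v1 + bform Y u v2.
Proof. by rewrite /bform mulmxDr mxE. Qed.

Lemma bformBr Y u v1 v2 : bform Y u (v1 - v2) = bform Y u v1 - bform Y u v2.
Proof. by rewrite /bform mulmxBr !mxE. Qed.

Lemma bformZr Y t u v : bform Y u (t *: v) = t * bform Y u v.
Proof. by rewrite /bform -scalemxAr mxE. Qed.

Lemma bformC Y u v : Y^T = Y -> bform Y u v = bform Y v u.
Proof.
move=> sym_Y; rewrite /bform; have -> : v^T *m Y *m u = (u^T *m Y *m v)^T.
  by rewrite !trmx_mul trmxK sym_Y mulmxA.
by rewrite [in RHS]mxE.
Qed.

Lemma bform_mulmx Y (P : 'M[R]_n) u v :
  bform (P^T *m Y *m P) u v = bform Y (P *m u) (P *m v).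
Proof. by rewrite /bform trmx_mul !mulmxA. Qed.

Lemma bform_delta Y i j : bform Y (delta_mx i 0) (delta_mx j 0) = Y i j.
Proof. by rewrite /bform trmx_delta -rowE -colE !mxE. Qed.

Lemma sqnormE v : sqnorm v = bform 1%:M v v.
Proof. by rewrite /bform mulmx1 mxE; apply: eq_bigr => i _; rewrite mxE expr2. Qed.

Lemma sqnorm_ge0 v : 0 <= sqnorm v.
Proof. by apply: sumr_ge0 => i _; exact: sqr_ge0. Qed.

Lemma sqnorm_eq0 v : (sqnorm v == 0) = (v == 0).
Proof.
rewrite psumr_eq0 => [|i _]; last exact: sqr_ge0.
apply/allP/eqP => [v0|-> i _]; last by rewrite mxE expr2 mulr0 eqxx.
apply/matrixP => i j; rewrite (ord1 j) mxE; apply/eqP.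
by rewrite -sqrf_eq0; exact: (implyP (v0 i (mem_index_enum i))).
Qed.

Lemma sqnormD_orth u v : bform 1%:M u v = 0 -> sqnorm (u + v) = sqnorm u + sqnorm v.
Proof.
move=> uv0; rewrite !sqnormE bformDl !bformDr uv0 (bformC v u (@trmx1 _ _)) uv0.
by rewrite addr0 add0r.
Qed.

Lemma sqnorm_gt0 v : v != 0 -> 0 < sqnorm v.
Proof. by move=> v_neq0; rewrite lt_def sqnorm_eq0 v_neq0 sqnorm_ge0. Qed.

Lemma sqnorm_delta i : sqnorm (delta_mx i 0) = 1.
Proof. by rewrite sqnormE bform_delta mxE eqxx. Qed.

Lemma range_mul_eq0 A v : (v^T <= A)%MS -> A *m v = 0 -> v = 0.
Proof.
move=> /submxP[x vA] Av0; apply/eqP; rewrite -sqnorm_eq0 sqnormE /bform mulmx1 vA.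
by rewrite -mulmxA Av0 mulmx0 mxE.
Qed.

Lemma psd_sym Y : psd Y -> Y^T = Y.
Proof. by case. Qed.

Lemma psd_bform_ge0 Y v : psd Y -> 0 <= bform Y v v.
Proof. by case=> _; apply. Qed.

Lemma bform_cauchy_schwarz Y u v : Y^T = Y -> 0 <= bform Y v v ->
  (forall t, 0 <= bform Y (u + t *: v) (u + t *: v)) ->
  bform Y u v ^+ 2 <= bform Y u u * bform Y v v.
Proof.
move=> sym_Y v_ge0 line_ge0; apply: quadratic_ge0_discr_le => // t.
have -> : bform Y u u + 2 * t * bform Y u v + t ^+ 2 * bform Y v v
    = bform Y (u + t *: v) (u + t *: v).
  by rewrite bformDl !bformDr !bformZl !bformZr (bformC v u sym_Y); ring.
exact: line_ge0.
Qed.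

Lemma psd_cauchy_schwarz Y u v : psd Y ->
  `|bform Y u v| <= Num.sqrt (bform Y u u * bform Y v v).
Proof.
move=> psd_Y; rewrite -sqrtr_sqr ler_sqrt ?mulr_ge0 ?psd_bform_ge0 //.
apply: bform_cauchy_schwarz (psd_sym psd_Y) (psd_bform_ge0 _ psd_Y) _ => t.
exact: psd_bform_ge0.
Qed.

Lemma psd_bform_le Y u v x y : psd Y -> bform Y u u <= x -> bform Y v v <= y ->
  `|bform Y u v| <= Num.sqrt (x * y).
Proof.
move=> psd_Y ux vy; apply: le_trans (psd_cauchy_schwarz u v psd_Y) _.
have x_ge0 : 0 <= x := le_trans (psd_bform_ge0 u psd_Y) ux.
by rewrite ler_sqrt ?ler_pM ?psd_bform_ge0 // mulr_ge0 // (le_trans (psd_bform_ge0 v psd_Y)).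
Qed.

Lemma psd_bform_le_same Y u v x : psd Y -> bform Y u u <= x -> bform Y v v <= x ->
  `|bform Y u v| <= x.
Proof.
move=> psd_Y ux vx; have x_ge0 : 0 <= x := le_trans (psd_bform_ge0 u psd_Y) ux.
by apply: le_trans (psd_bform_le psd_Y ux vx) _; rewrite -expr2 sqrtr_sqr ger0_norm.
Qed.

Lemma psdD A B : psd A -> psd B -> psd (A + B).
Proof.
move=> [sym_A A_ge0] [sym_B B_ge0]; split=> [|v].
  by rewrite /Defs.symmetric linearD /= sym_A sym_B.
by change (0 <= bform (A + B) v v); rewrite bformD addr_ge0 //; [exact: A_ge0|exact: B_ge0].
Qed.

Lemma psdZ t A : 0 <= t -> psd A -> psd (t *: A).
Proof.
move=> t_ge0 [sym_A A_ge0]; split=> [|v]; first by rewrite /Defs.symmetric linearZ /= sym_A.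
by change (0 <= bform (t *: A) v v); rewrite bformZ mulr_ge0 //; exact: A_ge0.
Qed.

Lemma psd_congr Y (P : 'M[R]_n) : psd Y -> psd (P^T *m Y *m P).
Proof.
move=> [sym_Y Y_ge0]; split=> [|v].
  by rewrite /Defs.symmetric !trmx_mul trmxK sym_Y mulmxA.
by change (0 <= bform (P^T *m Y *m P) v v); rewrite bform_mulmx; exact: Y_ge0.
Qed.

Lemma psd_outer v : psd (v *m v^T).
Proof.
split=> [|u]; first by rewrite /Defs.symmetric trmx_mul trmxK.
change (0 <= bform (v *m v^T) u u); rewrite bformE.
have -> : \sum_i \sum_j u i 0 * (v *m v^T) i j * u j 0 = (\sum_i u i 0 * v i 0) ^+ 2.
  rewrite expr2 mulr_suml; apply: eq_bigr => i _; rewrite mulr_sumr.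
  by apply: eq_bigr => j _; rewrite !mxE big_ord1 !mxE; ring.
exact: sqr_ge0.
Qed.

Lemma mdotDl A1 A2 B : mdot (A1 + A2) B = mdot A1 B + mdot A2 B.
Proof.
rewrite /mdot -big_split; apply: eq_bigr => i _; rewrite -big_split.
by apply: eq_bigr => j _; rewrite mxE mulrDl.
Qed.

Lemma mdotZl t A B : mdot (t *: A) B = t * mdot A B.
Proof.
rewrite /mdot mulr_sumr; apply: eq_bigr => i _; rewrite mulr_sumr.
by apply: eq_bigr => j _; rewrite mxE mulrA.
Qed.

Lemma mdot_trace A B : mdot A B = \tr (A^T *m B).
Proof.
rewrite /mdot /mxtrace exchange_big; apply: eq_bigr => j _.
by rewrite mxE; apply: eq_bigr => i _; rewrite mxE.
Qed.

Lemma mdot_congr Y B (P : 'M[R]_n) : mdot (P^T *m Y *m P) B = mdot Y (P *m B *m P^T).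
Proof.
rewrite !mdot_trace !trmx_mul trmxK -!mulmxA mxtrace_mulC -!mulmxA.
by rewrite mxtrace_mulC !mulmxA.
Qed.

Lemma mdot_outer A v : mdot A (v *m v^T) = bform A v v.
Proof.
rewrite /mdot bformE; apply: eq_bigr => i _; apply: eq_bigr => j _.
by rewrite !mxE big_ord1 !mxE; ring.
Qed.

Lemma mge_bform A B v : mge A B -> bform B v v <= bform A v v.
Proof. by move=> AB; rewrite -!mdot_outer; apply/AB/psd_outer. Qed.

Lemma mnorm_ge0 A : 0 <= mnorm A.
Proof. exact: sqrtr_ge0. Qed.

Lemma mnorm0 : mnorm (0 : 'M[R]_n) = 0.
Proof.
rewrite /mnorm /mdot big1 ?sqrtr0 // => i _.
by rewrite big1 // => j _; rewrite mxE mul0r.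
Qed.

Lemma sqr_mnorm A : mnorm A ^+ 2 = \sum_i \sum_j A i j ^+ 2.
Proof.
rewrite sqr_sqrtr; last by do 2!(apply: sumr_ge0 => ? _); rewrite -expr2 sqr_ge0.
by apply: eq_bigr => i _; apply: eq_bigr => j _; rewrite expr2.
Qed.

Lemma sqnorm_mul_le A v : sqnorm (A *m v) <= mnorm A ^+ 2 * sqnorm v.
Proof.
rewrite sqr_mnorm mulr_suml; apply: ler_sum => i _; rewrite mxE.
exact: cauchy_schwarz_sum.
Qed.

Lemma bform_le_mnorm A v : bform A v v <= mnorm A * sqnorm v.
Proof.
have -> : bform A v v = \sum_i v i 0 * (A *m v) i 0.
  by rewrite /bform -mulmxA mxE; apply: eq_bigr => i _; rewrite mxE.
have Av_ge0 : 0 <= mnorm A * sqnorm v := mulr_ge0 (mnorm_ge0 A) (sqnorm_ge0 v).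
apply: le_trans (ler_norm _) _; rewrite -(ger0_norm Av_ge0) -!sqrtr_sqr ler_sqrt ?sqr_ge0 //.
apply: le_trans (cauchy_schwarz_sum _ _) _.
apply: le_trans (ler_wpM2l (sqnorm_ge0 v) (sqnorm_mul_le A v)) _.
by rewrite exprMn mulrCA -expr2.
Qed.

Lemma psd_entry_le Y x i j : psd Y -> (forall v, bform Y v v <= x * sqnorm v) ->
  `|Y i j| <= x.
Proof.
move=> psd_Y Y_le; rewrite -bform_delta.
have le_x k : bform Y (delta_mx k 0) (delta_mx k 0) <= x.
  by rewrite -[x]mulr1 -(sqnorm_delta k); exact: Y_le.
exact: psd_bform_le_same.
Qed.

Lemma mnorm_le_entries A x : 0 <= x -> (forall i j, `|A i j| <= x) -> mnorm A <= n%:R * x.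
Proof.
move=> x_ge0 A_le; rewrite -(ger0_norm (mulr_ge0 (ler0n _ n) x_ge0)) -sqrtr_sqr.
rewrite /mnorm /mdot ler_sqrt ?sqr_ge0 //.
have -> : (n%:R * x) ^+ 2 = \sum_(i < n) \sum_(j < n) x ^+ 2.
  by rewrite !sumr_const card_ord -mulr_natl -mulr_natl; ring.
apply: ler_sum => i _; apply: ler_sum => j _.
by rewrite -expr2 -real_normK ?num_real // lerXn2r ?nnegrE ?normr_ge0 ?A_le.
Qed.

End BilinearForm.

Lemma rowspace_left_inverse (F : fieldType) m n (A : 'M[F]_(m, n)) (B : 'M[F]_n) :
  (forall u : 'rV_n, (u <= A)%MS -> u *m B = 0 -> u = 0) ->
  forall u : 'rV_n, (u <= A)%MS -> u *m B *m (pinvmx (A *m B) *m A) = u.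
Proof.
move=> injB u uA; set x := u *m B *m pinvmx (A *m B).
have xAB : x *m (A *m B) = u *m B by rewrite mulmxKpV // submxMr.
apply/eqP; rewrite mulmxA -/x -subr_eq0; apply/eqP/injB.
  by rewrite addmx_sub ?eqmx_opp ?submxMl.
by rewrite mulmxBl -mulmxA xAB subrr.
Qed.

Lemma range_projector (R : realType) n (z : 'M[R]_n) : z^T = z ->
  exists2 P : 'M[R]_n, z *m P = z & (P^T <= z)%MS.
Proof.
move=> sym_z.
have z_cap_ker : (z :&: kermx z)%MS = 0.
  apply/eqP/rowV0P => u; rewrite sub_capmx => /andP[uz /sub_kermxP uz0].
  apply: trmx_inj; rewrite trmx0; apply: (range_mul_eq0 (A := z)); first by rewrite trmxK.
  by rewrite -{1}sym_z -trmx_mul uz0 trmx0.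
have z_le_zz : (z <= z *m z)%MS.
  rewrite -(mxrank_leqif_sup (submxMl z z)).2.
  by have := mxrank_mul_ker z z; rewrite z_cap_ker mxrank0 addn0 => ->.
set G := pinvmx (z *m z).
exists (z *m (z *m G)^T); last by rewrite trmx_mul trmxK sym_z submxMl.
have zz_sym : (z *m z)^T = z *m z by rewrite trmx_mul sym_z.
by rewrite mulmxA -zz_sym -trmx_mul mulmxKpV // sym_z.
Qed.

Section SpectralGap.
Variables (R : realType) (n : nat) (z : 'M[R]_n).
Hypotheses (psd_z : psd z) (z_neq0 : z != 0).
Implicit Types v : 'cV[R]_n.

Definition rayleigh_quotients :=
  [set bform z v v / sqnorm v | v in [set v | (v^T <= z)%MS && (v != 0)]].

Definition rayleigh_inf := inf rayleigh_quotients.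

Let sym_z : z^T = z := psd_sym psd_z.

Let rayleigh_neq0 : rayleigh_quotients !=set0.
Proof.
have [j col_neq0] : exists j, col j z != 0.
  apply/existsP; apply: contraNT z_neq0 => /existsPn col0.
  apply/eqP/matrixP => i j; move/eqP/matrixP/(_ i 0): (negbNE (col0 j)).
  by rewrite !mxE.
exists (bform z (col j z) (col j z) / sqnorm (col j z)), (col j z) => //=.
by rewrite col_neq0 andbT colE trmx_mul sym_z submxMl.
Qed.

Let rayleigh_ge0 : lbound rayleigh_quotients 0.
Proof. by move=> _ [v _ <-]; rewrite divr_ge0 ?sqnorm_ge0 ?psd_bform_ge0. Qed.

Lemma rayleigh_inf_ge0 : 0 <= rayleigh_inf.
Proof. exact: lb_le_inf rayleigh_neq0 rayleigh_ge0. Qed.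

Lemma rayleigh_inf_le v : (v^T <= z)%MS -> rayleigh_inf * sqnorm v <= bform z v v.
Proof.
move=> vz; have [->|v_neq0] := eqVneq v 0.
  have /eqP -> : sqnorm (0 : 'cV[R]_n) == 0 by rewrite sqnorm_eq0.
  by rewrite mulr0 psd_bform_ge0.
rewrite -ler_pdivlMr ?sqnorm_gt0 //; apply: ge_inf; first by exists 0.
by exists v => //=; rewrite vz v_neq0.
Qed.

Let B := z - rayleigh_inf *: 1%:M.

Let mulB v : B *m v = z *m v - rayleigh_inf *: v.
Proof. by rewrite mulmxBl -scalemxAl mul1mx. Qed.

Let sym_B : B^T = B.
Proof. by rewrite linearB /= linearZ /= trmx1 sym_z. Qed.

Let range_mulB v : (v^T <= z)%MS -> ((B *m v)^T <= z)%MS.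
Proof.
move=> vz; rewrite mulB linearB /= linearZ /= trmx_mul sym_z.
by rewrite addmx_sub ?eqmx_opp ?scalemx_sub ?submxMl.
Qed.

Let bformB_ge0 v : (v^T <= z)%MS -> 0 <= bform B v v.
Proof. by move=> vz; rewrite bformB bformZ -sqnormE subr_ge0 rayleigh_inf_le. Qed.

Lemma sqnorm_mulB_le v : (v^T <= z)%MS -> sqnorm (B *m v) <= mnorm B * bform B v v.
Proof.
move=> vz; have Bvz := range_mulB vz.
have cs : bform B v (B *m v) ^+ 2 <= bform B v v * bform B (B *m v) (B *m v).
  apply: bform_cauchy_schwarz sym_B (bformB_ge0 Bvz) _ => t.
  by apply: bformB_ge0; rewrite linearD /= linearZ /= addmx_sub ?scalemx_sub.
have vBv : bform B v (B *m v) = sqnorm (B *m v).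
  by rewrite sqnormE /bform mulmx1 trmx_mul sym_B.
rewrite vBv in cs.
have [->|s_neq0] := eqVneq (sqnorm (B *m v)) 0.
  by rewrite mulr_ge0 ?mnorm_ge0 ?bformB_ge0.
have s_gt0 : 0 < sqnorm (B *m v) by rewrite lt_def s_neq0 sqnorm_ge0.
rewrite -(ler_pM2l s_gt0) -expr2; apply: le_trans cs _.
have := ler_wpM2l (bformB_ge0 vz) (bform_le_mnorm B (B *m v)).
lra.
Qed.

Lemma rayleigh_inf_coercive :
  (forall v, (v^T <= z)%MS -> B *m v = 0 -> v = 0) ->
  exists2 K, 0 < K & forall v, (v^T <= z)%MS -> sqnorm v <= K * bform B v v.
Proof.
move=> injB; set M := (pinvmx (z *m B) *m z)^T.
have invM v : (v^T <= z)%MS -> M *m (B *m v) = v.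
  move=> vz; apply: trmx_inj; rewrite !trmx_mul trmxK sym_B.
  apply: rowspace_left_inverse vz => u uz uB0.
  apply: trmx_inj; rewrite trmx0; apply: injB; first by rewrite trmxK.
  by rewrite -{1}sym_B -trmx_mul uB0 trmx0.
exists (mnorm M ^+ 2 * mnorm B + 1); first by rewrite ltr_pwDr ?mulr_ge0 ?sqr_ge0 ?mnorm_ge0.
move=> v vz; have v_le : sqnorm v <= mnorm M ^+ 2 * sqnorm (B *m v).
  by rewrite -{1}(invM v vz); exact: sqnorm_mul_le.
have := ler_wpM2l (sqr_ge0 (mnorm M)) (sqnorm_mulB_le vz).
have := bformB_ge0 vz.
lra.
Qed.

Lemma rayleigh_inf_eigenvector :
  exists2 v : 'cV[R]_n, (v^T <= z)%MS && (v != 0) & z *m v = rayleigh_inf *: v.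
Proof.
apply: contrapT => no_eigen.
have injB v : (v^T <= z)%MS -> B *m v = 0 -> v = 0.
  move=> vz Bv0; apply: contra_notP no_eigen => /eqP v_neq0.
  by exists v; [rewrite vz | apply/eqP; rewrite -subr_eq0 -mulB Bv0].
have [K K_gt0 coercive] := rayleigh_inf_coercive injB.
(* Otherwise rayleigh_inf + 1/K would be a lower bound of the Rayleigh quotients. *)
have : rayleigh_inf + K^-1 <= rayleigh_inf.
  apply: lb_le_inf rayleigh_neq0 _ => _ [v /andP[vz v_neq0] <-].
  rewrite ler_pdivlMr ?sqnorm_gt0 // mulrDl.
  have := coercive v vz; rewrite bformB bformZ -sqnormE => le_K.
  have Kinv_ge0 : 0 <= K^-1 by rewrite invr_ge0 ltW.
  have := ler_wpM2l Kinv_ge0 le_K.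
  rewrite mulrA mulVf ?gt_eqF // mul1r.
  lra.
by rewrite gerDl invr_le0 leNgt K_gt0.
Qed.

Lemma rayleigh_inf_gt0 : 0 < rayleigh_inf.
Proof.
have [v /andP[vz v_neq0] zv] := rayleigh_inf_eigenvector.
rewrite lt_def rayleigh_inf_ge0 andbT; apply: contra v_neq0 => /eqP l0.
by apply/eqP/(range_mul_eq0 vz); rewrite zv l0 scale0r.
Qed.

Lemma mpos_rayleigh_inf : mpos z = rayleigh_inf.
Proof.
have [v /andP[vz v_neq0] zv] := rayleigh_inf_eigenvector.
have l_eigen : 0 < rayleigh_inf /\ eigenvalue z rayleigh_inf.
  split; first exact: rayleigh_inf_gt0.
  apply/eigenvalueP; exists v^T; first by rewrite -{1}sym_z -trmx_mul zv linearZ.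
  by rewrite trmx_eq0.
have l_lb : lbound [set m | 0 < m /\ eigenvalue z m] rayleigh_inf.
  move=> m [m_gt0 /eigenvalueP [u uz u_neq0]].
  have zu : z *m u^T = m *: u^T by rewrite -{1}sym_z -trmx_mul uz linearZ.
  have u_range : (u^T^T <= z)%MS.
    rewrite trmxK -[u]scale1r -(mulVf (lt0r_neq0 m_gt0)) -scalerA -uz.
    by rewrite scalemx_sub ?submxMl.
  have zuu : bform z u^T u^T = m * sqnorm u^T.
    by rewrite sqnormE /bform mulmx1 -mulmxA zu -scalemxAr mxE.
  by have := rayleigh_inf_le u_range; rewrite zuu ler_pM2r // sqnorm_gt0 ?trmx_eq0.
apply/le_anti/andP; split; first by apply: ge_inf => //; exists 0 => m [/ltW].
exact: lb_le_inf (ex_intro _ rayleigh_inf l_eigen) l_lb.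
Qed.

Lemma mpos_gt0 : 0 < mpos z.
Proof. by rewrite mpos_rayleigh_inf; exact: rayleigh_inf_gt0. Qed.

Lemma mpos_range_le v : (v^T <= z)%MS -> mpos z * sqnorm v <= bform z v v.
Proof. by rewrite mpos_rayleigh_inf; exact: rayleigh_inf_le. Qed.

End SpectralGap.

Section Paths.
Variables (R : realType) (n : nat).

Definition entrywise_close (pi pi' : R -> 'M[R]_n) (B : R) :=
  forall s, 0 <= s <= 1 -> forall i j, `|(pi s - pi' s) i j| <= B.

Lemma entrywise_close_le (pi pi' : R -> 'M[R]_n) (B B' : R) :
  B <= B' -> entrywise_close pi pi' B -> entrywise_close pi pi' B'.
Proof. by move=> BB' close s s01 i j; exact: le_trans (close s s01 i j) BB'. Qed.

Lemma in_Pi_z_cst (z : 'M[R]_n) : psd z -> in_Pi_z z (fun=> z).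
Proof.
move=> psd_z; split=> //; split; [by [] | split].
- by move=> s s' _ _ _ c _; exact: lexx.
- by move=> s _ i j; exact: cvg_cst.
Qed.

Lemma cvg_mulmx_entries T (F : set_system T) (FF : Filter F) (Y : T -> 'M[R]_n)
    (Y0 A B : 'M[R]_n) :
  (forall i j, Y t i j @[t --> F] --> Y0 i j) ->
  forall i j, (A *m Y t *m B) i j @[t --> F] --> (A *m Y0 *m B) i j.
Proof.
move=> cvgY i j; rewrite mxE; under eq_cvg do rewrite mxE.
apply: cvg_big => [|k _]; first exact: add_continuous.
apply: cvgMl; rewrite mxE; under eq_cvg do rewrite mxE.
apply: cvg_big => [|l _]; first exact: add_continuous.
by apply: cvgMr; apply: cvgY.
Qed.

Lemma in_Pi_congr (pi : R -> 'M[R]_n) (c : R) (P X : 'M[R]_n) :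
  in_Pi pi -> 0 <= c -> psd X -> in_Pi (fun s => c *: (P^T *m pi s *m P) + X).
Proof.
move=> [psd_pi [mono_pi cont_pi]] c_ge0 psd_X; split; [|split].
- by move=> s s01; apply/psdD/psd_X/psdZ/psd_congr/psd_pi.
- move=> s s' s_ge0 ss' s'_le1 C psd_C.
  rewrite !mdotDl !mdotZl !mdot_congr lerD2r ler_wpM2l //.
  by apply: mono_pi => //; rewrite -[P in P *m C]trmxK; exact: psd_congr.
- move=> s s01 i j /=.
  have entry M : (c *: M + X) i j = c * M i j + X i j by rewrite !mxE.
  rewrite entry; under eq_cvg do rewrite entry.
  apply: cvgD; last exact: cvg_cst.
  by apply: cvgMr; apply: cvg_mulmx_entries; exact: cont_pi.
Qed.

End Paths.

Section PathBounds.
Variables (R : realType) (n : nat) (z w : 'M[R]_n) (pi : R -> 'M[R]_n).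
Hypotheses (psd_z : psd z) (pi_zw : in_Pi_z (z + w) pi).

Lemma path_psd s : 0 <= s <= 1 -> psd (pi s).
Proof. by case: pi_zw => [[psd_pi _] _]; exact: psd_pi. Qed.

Lemma path_bform_le s v : 0 <= s <= 1 -> bform (pi s) v v <= bform z v v + bform w v v.
Proof.
case: pi_zw => [[_ [mono_pi _]] pi1] /andP[s_ge0 s_le1].
by rewrite -bformD -pi1; apply/mge_bform/mono_pi; rewrite ?lexx.
Qed.

Lemma path_bform_le_sqnorm s v : 0 <= s <= 1 ->
  bform (pi s) v v <= (mnorm z + mnorm w) * sqnorm v.
Proof.
move=> s01; apply: le_trans (path_bform_le v s01) _.
by rewrite mulrDl lerD ?bform_le_mnorm.
Qed.

Lemma cst_path_close : entrywise_close pi (fun=> z) (2 * (mnorm z + mnorm w)).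
Proof.
move=> s s01 i j; rewrite !mxE; apply: le_trans (ler_normB _ _) _.
have := psd_entry_le i j (path_psd s01) (fun v => path_bform_le_sqnorm v s01).
have := psd_entry_le i j psd_z (bform_le_mnorm z).
have := mnorm_ge0 w.
lra.
Qed.

End PathBounds.

Section ShrunkPath.
Variables (R : realType) (n : nat) (z w P : 'M[R]_n) (pi : R -> 'M[R]_n) (l c : R).
Hypotheses (psd_z : psd z) (psd_w : psd w) (pi_zw : in_Pi_z (z + w) pi).
Hypotheses (zP : z *m P = z) (P_range : (P^T <= z)%MS).
Hypothesis gap : forall v : 'cV[R]_n, (v^T <= z)%MS -> l * sqnorm v <= bform z v v.
Hypotheses (c_ge0 : 0 <= c) (c_le1 : c <= 1) (c_gap : c * (l + mnorm w) <= l).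
Implicit Types u v : 'cV[R]_n.

Definition shrunk_path s := c *: (P^T *m pi s *m P) + (z - c *: (P^T *m (z + w) *m P)).

Let sym_z : z^T = z := psd_sym psd_z.

Lemma range_proj v : ((P *m v)^T <= z)%MS.
Proof. by rewrite trmx_mul (submx_trans (submxMl _ _) P_range). Qed.

Lemma bform_proj u v : bform z (P *m u) (P *m v) = bform z u v.
Proof. by rewrite -bform_mulmx -mulmxA zP -{1}sym_z -trmx_mul zP sym_z. Qed.

Lemma bform_sub_proj u v : bform z u (v - P *m v) = 0.
Proof. by rewrite /bform -mulmxA mulmxBr mulmxA zP subrr mulmx0 mxE. Qed.

Lemma sqnorm_proj_split v : sqnorm v = sqnorm (P *m v) + sqnorm (v - P *m v).
Proof.
have orth : bform 1%:M (P *m v) (v - P *m v) = 0.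
  have /submxP[x xz] := range_proj v.
  by rewrite /bform mulmx1 xz -mulmxA mulmxBr mulmxA zP subrr mulmx0 mxE.
by rewrite -(sqnormD_orth orth) addrC subrK.
Qed.

Lemma sqnorm_proj_le v : sqnorm (P *m v) <= sqnorm v.
Proof. by rewrite [leRHS]sqnorm_proj_split lerDl sqnorm_ge0. Qed.

Lemma sqnorm_sub_proj_le v : sqnorm (v - P *m v) <= sqnorm v.
Proof. by rewrite [leRHS]sqnorm_proj_split lerDr sqnorm_ge0. Qed.

Lemma psd_shrunk_offset : psd (z - c *: (P^T *m (z + w) *m P)).
Proof.
split.
  rewrite /Defs.symmetric linearB /= linearZ /= !trmx_mul trmxK linearD /= sym_z.
  by rewrite (psd_sym psd_w) mulmxA.
move=> v; change (0 <= bform (z - c *: (P^T *m (z + w) *m P)) v v).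
rewrite bformB bformZ bform_mulmx bformD bform_proj.
have := gap (range_proj v); rewrite bform_proj => gap_v.
have := ler_wpM2l c_ge0 (bform_le_mnorm w (P *m v)).
have : 0 <= (1 - c) * (bform z v v - l * sqnorm (P *m v)) by rewrite mulr_ge0 ?subr_ge0.
have : 0 <= (l - c * (l + mnorm w)) * sqnorm (P *m v).
  by rewrite mulr_ge0 ?subr_ge0 ?sqnorm_ge0.
lra.
Qed.

Lemma shrunk_path_in_Pi : in_Pi_z z shrunk_path.
Proof.
case: pi_zw => pi_Pi pi1; split; first exact: in_Pi_congr pi_Pi c_ge0 psd_shrunk_offset.
by rewrite /shrunk_path pi1 addrC subrK.
Qed.

Lemma bform_sub_shrunk s u v : bform (pi s - shrunk_path s) u v =
  bform (pi s) (u - P *m u) v + bform (pi s) (P *m u) (v - P *m v)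
  + (1 - c) * bform (pi s) (P *m u) (P *m v) - (1 - c) * bform z u v
  + c * bform w (P *m u) (P *m v).
Proof.
rewrite /shrunk_path bformB bformD bformB !bformZ !bform_mulmx bformD bform_proj.
by rewrite !bformBl !bformBr; ring.
Qed.

Lemma shrunk_path_bform_le s u v : 0 <= s <= 1 -> sqnorm u <= 1 -> sqnorm v <= 1 ->
  `|bform (pi s - shrunk_path s) u v|
    <= 3 * Num.sqrt ((mnorm z + mnorm w) * mnorm w) + 2 * (1 - c) * (mnorm z + mnorm w).
Proof.
move=> s01 u_le1 v_le1; rewrite bform_sub_shrunk.
set a := mnorm z; set r := mnorm w; set S := Num.sqrt ((a + r) * r).
have a_ge0 : 0 <= a := mnorm_ge0 z; have r_ge0 : 0 <= r := mnorm_ge0 w.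
have psd_Y := path_psd pi_zw s01.
have Y_le x : sqnorm x <= 1 -> bform (pi s) x x <= a + r.
  move=> x_le1; apply: le_trans (path_bform_le_sqnorm pi_zw x s01) _.
  by rewrite ler_piMr ?addr_ge0.
have Y_ker_le x : sqnorm x <= 1 -> bform (pi s) (x - P *m x) (x - P *m x) <= r.
  move=> x_le1; apply: le_trans (path_bform_le pi_zw _ s01) _.
  rewrite bform_sub_proj add0r; apply: le_trans (bform_le_mnorm w _) _.
  by rewrite ler_piMr // (le_trans (sqnorm_sub_proj_le x)).
have w_le x : sqnorm x <= 1 -> bform w (P *m x) (P *m x) <= r.
  move=> x_le1; apply: le_trans (bform_le_mnorm w _) _.
  by rewrite ler_piMr // (le_trans (sqnorm_proj_le x)).
have z_le x : sqnorm x <= 1 -> bform z x x <= a.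
  by move=> x_le1; apply: le_trans (bform_le_mnorm z _) _; rewrite ler_piMr.
have Pu_le1 := le_trans (sqnorm_proj_le u) u_le1.
have Pv_le1 := le_trans (sqnorm_proj_le v) v_le1.
have c'_ge0 : 0 <= 1 - c by rewrite subr_ge0.
have h1 : `|bform (pi s) (u - P *m u) v| <= S.
  by rewrite /S mulrC; exact: psd_bform_le psd_Y (Y_ker_le u u_le1) (Y_le v v_le1).
have h2 : `|bform (pi s) (P *m u) (v - P *m v)| <= S.
  exact: psd_bform_le psd_Y (Y_le _ Pu_le1) (Y_ker_le v v_le1).
have h3 : `|(1 - c) * bform (pi s) (P *m u) (P *m v)| <= (1 - c) * (a + r).
  rewrite normrM ger0_norm // ler_wpM2l //.
  exact: psd_bform_le_same psd_Y (Y_le _ Pu_le1) (Y_le _ Pv_le1).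
have h4 : `|(1 - c) * bform z u v| <= (1 - c) * a.
  rewrite normrM ger0_norm // ler_wpM2l //.
  exact: psd_bform_le_same psd_z (z_le u u_le1) (z_le v v_le1).
have h5 : `|c * bform w (P *m u) (P *m v)| <= c * r.
  rewrite normrM ger0_norm // ler_wpM2l //.
  exact: psd_bform_le_same psd_w (w_le u u_le1) (w_le v v_le1).
have r_le_S : r <= S.
  rewrite /S -{1}(ger0_norm r_ge0) -sqrtr_sqr ler_sqrt ?mulr_ge0 ?addr_ge0 //.
  by rewrite expr2 ler_wpM2r // lerDr.
have cr_le_r : c * r <= r := ler_piMl r_ge0 c_le1.
move: h1 h2 h3 h4 h5; rewrite !ler_norml.
move=> /andP[? ?] /andP[? ?] /andP[? ?] /andP[? ?] /andP[? ?].
by apply/andP; split; lra.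
Qed.

End ShrunkPath.

Section KBounds.
Variables (R : realType) (n : nat).

Lemma div_addr_le_sqrt (l r : R) : 0 < l -> 0 <= r -> r / (l + r) <= Num.sqrt r / Num.sqrt l.
Proof.
move=> l_gt0 r_ge0.
have rE : r = Num.sqrt r ^+ 2 by rewrite sqr_sqrtr.
have lE : l = Num.sqrt l ^+ 2 by rewrite sqr_sqrtr // ltW.
have t_gt0 : 0 < Num.sqrt l by rewrite sqrtr_gt0.
have s_ge0 : 0 <= Num.sqrt r := sqrtr_ge0 r.
set s := Num.sqrt r in rE s_ge0 *; set t := Num.sqrt l in lE t_gt0 *.
rewrite [in X in X <= _]rE [in X in X <= _]lE.
have D_gt0 : 0 < t ^+ 2 + s ^+ 2 by have := sqr_ge0 s; have := exprn_gt0 2 t_gt0; lra.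
rewrite ler_pdivrMr // mulrAC ler_pdivlMr //.
(* s (t^2 + s^2) - s^2 t = s (t - s)^2 + s^2 t *)
have := mulr_ge0 s_ge0 (sqr_ge0 (t - s)); have := mulr_ge0 (sqr_ge0 s) (ltW t_gt0).
lra.
Qed.

Lemma Kfun_ge (z : 'M[R]_n) r : z != 0 -> 0 <= r ->
  (mnorm z + r) * (Num.sqrt r / Num.sqrt (mpos z)) + Num.sqrt ((mnorm z + r) * r)
    <= Kfun z r.
Proof.
move=> z_neq0 r_ge0; rewrite /Kfun (negbTE z_neq0) lerD2r.
set sa := Num.sqrt (mnorm z); set sl := Num.sqrt (mpos z).
have -> : (mnorm z + r) * (1 + sa / sl) / sl * Num.sqrt r
    = (mnorm z + r) * (Num.sqrt r / sl) * (1 + sa / sl) by ring.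
apply: ler_peMr; first by rewrite mulr_ge0 ?addr_ge0 ?mnorm_ge0 ?divr_ge0 ?sqrtr_ge0.
by rewrite lerDl divr_ge0 ?sqrtr_ge0.
Qed.

Lemma Kfun_ge0 (z : 'M[R]_n) r : 0 <= r -> 0 <= Kfun z r.
Proof.
move=> r_ge0; have [->|z_neq0] := eqVneq z 0; first by rewrite /Kfun eqxx.
apply: le_trans (Kfun_ge z_neq0 r_ge0).
by rewrite addr_ge0 ?mulr_ge0 ?addr_ge0 ?mnorm_ge0 ?divr_ge0 ?sqrtr_ge0.
Qed.

Lemma Kfun_lt_cases (z : 'M[R]_n) r : psd z -> 0 <= r ->
  Kfun z r < mnorm z + r -> z != 0 /\ r < mpos z.
Proof.
move=> psd_z r_ge0 K_lt.
have z_neq0 : z != 0.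
  by apply: contraTneq K_lt => ->; rewrite /Kfun eqxx mnorm0 add0r ltxx.
split=> //; rewrite ltNge; apply: contraTN K_lt => l_le_r; rewrite -leNgt.
apply: le_trans (Kfun_ge z_neq0 r_ge0).
have rho_ge1 : 1 <= Num.sqrt r / Num.sqrt (mpos z).
  by rewrite ler_pdivlMr ?sqrtr_gt0 ?mpos_gt0 // mul1r ler_sqrt.
apply: le_trans (ler_peMr (addr_ge0 (mnorm_ge0 z) r_ge0) rho_ge1) _.
by rewrite lerDl sqrtr_ge0.
Qed.

End KBounds.

Lemma shrunk_path_close (R : realType) n (z w : 'M[R]_n) (pi : R -> 'M[R]_n) :
  psd z -> psd w -> in_Pi_z (z + w) pi -> z != 0 -> mnorm w < mpos z ->
  exists2 pi', in_Pi_z z pi' & entrywise_close pi pi' (3 * Kfun z (mnorm w)).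
Proof.
move=> psd_z psd_w pi_zw z_neq0 r_lt_l.
have K_ge := Kfun_ge z_neq0 (mnorm_ge0 w).
set a := mnorm z in K_ge *; set r := mnorm w in r_lt_l K_ge *.
set l := mpos z in r_lt_l K_ge *.
have a_ge0 : 0 <= a := mnorm_ge0 z; have r_ge0 : 0 <= r := mnorm_ge0 w.
have l_gt0 : 0 < l := mpos_gt0 psd_z z_neq0.
have lr_gt0 : 0 < l + r by rewrite ltr_pwDl.
pose c := l / (l + r).
have c_ge0 : 0 <= c by rewrite divr_ge0 // ltW.
have c_gap : c * (l + r) = l by rewrite /c divfK // gt_eqF.
have c_le1 : c <= 1 by rewrite ler_pdivrMr // mul1r lerDl.
have one_sub_c : 1 - c = r / (l + r).
  by rewrite /c -[1](divff (lt0r_neq0 lr_gt0)) -mulrBl addrAC subrr add0r.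
have [P zP P_range] := range_projector (psd_sym psd_z).
exists (shrunk_path z w P pi c).
  by apply: (shrunk_path_in_Pi (l := l)) => //; [exact: mpos_range_le | rewrite c_gap].
move=> s s01 i j; rewrite -(bform_delta (pi s - _)).
apply: le_trans (shrunk_path_bform_le psd_z psd_w pi_zw zP P_range c_ge0 c_le1 s01 _ _) _;
  rewrite ?sqnorm_delta // -/a -/r.
have := ler_wpM2r (addr_ge0 a_ge0 r_ge0) (div_addr_le_sqrt l_gt0 r_ge0).
rewrite -one_sub_c => c_le_rho.
have : 0 <= (1 - c) * (a + r) by rewrite mulr_ge0 ?subr_ge0 ?addr_ge0.
lra.
Qed.

(* The nonnegative integral is a supremum over simple functions below the
   integrand, so this comparison needs no measurability of f. *)
Lemma integral_itv01_le (R : realType) (f : R -> R) (B : R) :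
  (forall s, 0 <= s <= 1 -> 0 <= f s <= B) ->
  (\int[@lebesgue_measure R]_(s in `[0%R, 1%R]) (f s)%:E <= B%:E)%E.
Proof.
move=> f_bnd; have /andP[f0_ge0 f0_le] : 0 <= f 0 <= B by apply: f_bnd; rewrite lexx ler01.
have B_ge0 := le_trans f0_ge0 f0_le.
apply: (@le_trans _ _ (\int[@lebesgue_measure R]_(s in `[0%R, 1%R]) (cst B%:E) s)%E).
  rewrite !ge0_integralE.
  - apply: ereal_sup_le => _ [h hf <-]; exists h => // x.
    apply: le_trans (hf x) _; rewrite /patch; case: ifP => // /set_mem.
    by rewrite /= in_itv /= => /f_bnd /andP[_ h1]; rewrite lee_fin.
  - by move=> x _; rewrite lee_fin.
  - by move=> x; rewrite /= in_itv /= => /f_bnd /andP[h1 _]; rewrite lee_fin.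
rewrite integral_cst; last exact: measurable_itv.
have := @lebesgue_measure_itv R `[0%R, 1%R]; rewrite /= lte_fin ltr01 => ->.
by rewrite oppr0 adde0 mule1.
Qed.

Lemma integral_mnorm_le (R : realType) n (pi pi' : R -> 'M[R]_n) (x : R) : 0 <= x ->
  entrywise_close pi pi' x ->
  (\int[@lebesgue_measure R]_(s in `[0%R, 1%R]) (mnorm (pi s - pi' s))%:E
    <= (n%:R * x)%:E)%E.
Proof.
move=> x_ge0 close; apply: integral_itv01_le => s s01.
by rewrite mnorm_ge0 mnorm_le_entries //; exact: close.
Qed.

Theorem lemma3p5 (R : realType) (D : nat) :
  exists C : R, forall (z w : 'M[R]_D) (pi : R -> 'M[R]_D),
    psd z -> psd w -> in_Pi_z (z + w) pi ->
    exists pi' : R -> 'M[R]_D, in_Pi_z z pi' /\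
      (\int[@lebesgue_measure R]_(s in `[0%R, 1%R])
          (mnorm (pi s - pi' s))%:E <= (C * Kfun z (mnorm w))%:E)%E.
Proof.
exists (3 * D%:R) => z w pi psd_z psd_w pi_zw.
have K_ge0 : 0 <= 3 * Kfun z (mnorm w) by rewrite mulr_ge0 ?Kfun_ge0 ?mnorm_ge0.
suff [pi' pi'_z close] :
    exists2 pi', in_Pi_z z pi' & entrywise_close pi pi' (3 * Kfun z (mnorm w)).
  exists pi'; split=> //; apply: le_trans (integral_mnorm_le K_ge0 close) _.
  by rewrite mulrA (mulrC D%:R).
have [ar_le_K|K_lt_ar] := leP (mnorm z + mnorm w) (Kfun z (mnorm w)).
  exists (fun=> z); first exact: in_Pi_z_cst.
  apply: entrywise_close_le (cst_path_close psd_z pi_zw).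
  by have := mnorm_ge0 z; have := mnorm_ge0 w; lra.
have [z_neq0 r_lt_l] := Kfun_lt_cases psd_z (mnorm_ge0 w) K_lt_ar.
exact: shrunk_path_close.
Qed.
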